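(* Let $C$ be a linear code over $\mathbb{Z}_4$ of type $4^{k_1}2^{k_2}$ and length $n$ which is projective, Plotkin-optimal, and has exactly two distinct nonzero Lee weights. Then there is an integer $t$ with $1\le t\le k_1$ such that $$n=d_L(C)=2^{2k_1+k_2-1}-2^{2k_1+k_2-t-1}.$$ Moreover, the nonzero Lee weights of $C$ are $w_1=2^{2k_1+k_2-1}-2^{2k_1+k_2-t-1}$ and $w_2=2^{2k_1+k_2-1}$, and $A_{w_1}=2^{2k_1+k_2}-2^t$, $A_{w_2}=2^t-1$.
   Context: A linear code of length $n$ over $\mathbb{Z}_4$ is a $\mathbb{Z}_4$-submodule of $\mathbb{Z}_4^n$; it has type $4^{k_1}2^{k_2}$ if it is isomorphic as a group to $\mathbb{Z}_4^{k_1}\times\mathbb{Z}_2^{k_2}$ (so $|C|=4^{k_1}2^{k_2}$). The Lee weight on $\mathbb{Z}_4$ is $w_L(0)=0,w_L(1)=1,w_L(2)=2,w_L(3)=1$, extended additively to vectors; $d_L(C)$ is the minimum Lee weight of a nonzero codeword. $C$ is Plotkin-optimal if $d_L(C)=\lfloor \frac{|C|}{|C|-1}n\rfloor$. The dual $C^\perp$ is taken with respect to the inner product $\mathbf{x}\cdot\mathbf{y}=\sum x_iy_i\in\mathbb{Z}_4$, and $C$ is projective if $d_L(C^\perp)\ge 3$. $A_w$ denotes the number of codewords of $C$ of Lee weight $w$. *)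

From HB Require Import structures.
From mathcomp Require Import all_boot all_order all_algebra.
Set Implicit Arguments. Unset Strict Implicit. Unset Printing Implicit Defensive.
Import GRing.Theory.
Local Open Scope ring_scope.

Definition linear_code (n : nat) (C : {set 'rV['Z_4]_n}) : Prop :=
  [/\ (0 : 'rV['Z_4]_n) \in C,
      (forall x y, x \in C -> y \in C -> x + y \in C) &
      (forall (a : 'Z_4) x, x \in C -> a *: x \in C)].

(* C has type 4^k1 2^k2 : C is isomorphic as a group to Z4^k1 x Z2^k2 *)
Definition code_type (n k1 k2 : nat) (C : {set 'rV['Z_4]_n}) : Prop :=
  exists f : 'rV['Z_4]_k1 * 'rV['Z_2]_k2 -> 'rV['Z_4]_n,
    [/\ (forall u v, f (u + v) = f u + f v), injective f &
        forall x, (x \in C) <-> (exists u, x = f u)].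

Definition leeZ4 (a : 'Z_4) : nat := minn (val a) (4 - val a).
Definition leeW (n : nat) (x : 'rV['Z_4]_n) : nat := (\sum_(i < n) leeZ4 (x ord0 i))%N.

(* minimum Lee distance; for the zero code it is a value exceeding every
   possible Lee weight (playing the role of +infinity) *)
Definition dL (n : nat) (C : {set 'rV['Z_4]_n}) : nat :=
  (\big[minn/(n.*2).+3]_(x in C | x != 0%R) leeW x)%N.

Definition dotZ4 (n : nat) (x y : 'rV['Z_4]_n) : 'Z_4 := \sum_(i < n) x ord0 i * y ord0 i.

Definition dual_code (n : nat) (C : {set 'rV['Z_4]_n}) : {set 'rV['Z_4]_n} :=
  [set y | [forall x in C, dotZ4 x y == 0]].

Definition projective (n : nat) (C : {set 'rV['Z_4]_n}) : Prop :=
  (3 <= dL (dual_code C))%N.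

Definition plotkin_optimal (n : nat) (C : {set 'rV['Z_4]_n}) : Prop :=
  dL C = ((#|C| * n) %/ (#|C| - 1))%N.

Definition lee_weights (n : nat) (C : {set 'rV['Z_4]_n}) : seq nat :=
  undup [seq leeW x | x <- enum (C :\ 0)].

Definition weight_count (n : nat) (C : {set 'rV['Z_4]_n}) (w : nat) : nat :=
  #|[set x in C | leeW x == w]|.

(* With chi a := Re (i ^ a) on Z4, the Lee weight of a word x of length n is
   n - sum_j chi x_j.  Present C as the image of G = Z4^k1 x Z2^k2 under an
   injective homomorphism F and put g u := n - leeW (F u).  Orthogonality of
   characters turns projectivity (no dual word of Lee weight <= 2) into the
   moment identities  sum_u g u = 0,  sum_u (g u)^2 = n |G| / 2  and
   sum_u g u * chi (psi u) = 0  for every homomorphism psi : G -> 2 Z4.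
   The second moment gives 2n <= |G|, so the Plotkin bound makes every nonzero
   weight >= n, and the first moment then forces the smaller weight to be n.
   Thus g is n at 0, 0 on the light words and -(w2 - n) on the set Q of heavy
   ones; the first two moments give (w2 - n) |Q| = n and 2n + 2(w2 - n) = |G|,
   so |Q| + 1 divides |G| = 2^(2k1+k2) and is some 2^t.  The third moment makes
   every psi vanish on Q, so {0} U Q lies in 2 Z4^k1 x 0 and t <= k1. *)

From HB Require Import structures.
From mathcomp Require Import all_boot all_order all_algebra zify.
Set Implicit Arguments. Unset Strict Implicit. Unset Printing Implicit Defensive.
Import Order.TTheory GRing.Theory Num.Theory.


Section Z4.
Local Open Scope ring_scope.

Definition chiZ4 (a : 'Z_4) : int :=
  match val a with 0%N => 1 | 2%N => -1 | _ => 0 end.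

Lemma chiZ4_mul (a b : 'Z_4) : 2 * chiZ4 a * chiZ4 b = chiZ4 (a + b) + chiZ4 (a - b).
Proof. by case: a => -[|[|[|[|?]]]] //= ?; case: b => -[|[|[|[|?]]]]. Qed.

Lemma chiZ4_add2 (a : 'Z_4) : chiZ4 (a + 2) = - chiZ4 a.
Proof. by case: a => -[|[|[|[|?]]]]. Qed.

Lemma chiZ4_le1 (a : 'Z_4) : chiZ4 a <= 1.
Proof. by case: a => -[|[|[|[|?]]]]. Qed.

Lemma chiZ4_eq1 (a : 'Z_4) : (chiZ4 a == 1) = (a == 0).
Proof. by case: a => -[|[|[|[|?]]]]. Qed.

Lemma leeZ4_chiZ4 (a : 'Z_4) : (leeZ4 a)%:Z = 1 - chiZ4 a.
Proof. by case: a => -[|[|[|[|?]]]]. Qed.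

Lemma Z4_neq0_mulrn2 (a : 'Z_4) : a != 0 -> a = 2 \/ a *+ 2 = 2.
Proof. by case: a => -[|[|[|[|?]]]] //= ? _; [right|left|right]; apply: val_inj. Qed.

Lemma Z4_2torsion (a : 'Z_4) : a *+ 2 = 0 -> a = 2 *+ (a == 2).
Proof. by case: a => -[|[|[|[|?]]]] //= ? _; apply: val_inj. Qed.

Definition double_Z2 (b : 'Z_2) : 'Z_4 := 2 *+ val b.

Lemma double_Z2D : {morph double_Z2 : a b / a + b}.
Proof. by case=> -[|[|?]] //= ?; case=> -[|[|?]] //= ?; apply: val_inj. Qed.

Lemma double_Z2_2torsion (b : 'Z_2) : double_Z2 b *+ 2 = 0.
Proof. by case: b => -[|[|?]] //= ?; apply: val_inj. Qed.

Lemma double_Z2_eq0 (b : 'Z_2) : (double_Z2 b == 0) = (b == 0).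
Proof. by case: b => -[|[|?]]. Qed.

End Z4.

(* MathComp does not declare this join for pairs. *)
HB.instance Definition _ (M1 M2 : finZmodType) := Finite.on (M1 * M2)%type.

Section CharacterSums.
Local Open Scope ring_scope.

Lemma morph_add0 (U V : zmodType) (f : U -> V) : {morph f : x y / x + y} -> f 0 = 0.
Proof. by move=> fD; apply: (addrI (f 0)); rewrite -fD !addr0. Qed.

Lemma sum_chiZ4_mul (T : finType) (f1 f2 : T -> 'Z_4) :
  2 * \sum_u chiZ4 (f1 u) * chiZ4 (f2 u) =
  \sum_u chiZ4 (f1 u + f2 u) + \sum_u chiZ4 (f1 u - f2 u).
Proof. by rewrite mulr_sumr -big_split; apply: eq_bigr => u _; rewrite mulrA chiZ4_mul. Qed.

Variable G : finZmodType.

Lemma sum_chiZ4_additive (f : G -> 'Z_4) v :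
  {morph f : x y / x + y} -> f v != 0 -> \sum_u chiZ4 (f u) = 0.
Proof.
move=> fD fv0; have [w fw] : exists w, f w = 2.
  by case: (Z4_neq0_mulrn2 fv0) => [|<-]; [exists v | exists (v + v); rewrite fD mulr2n].
suff : \sum_u chiZ4 (f u) = - \sum_u chiZ4 (f u) by lia.
rewrite {1}(reindex_inj (addIr w)) -sumrN; apply: eq_bigr => u _ /=.
by rewrite fD fw chiZ4_add2.
Qed.

Lemma sum_chiZ4_sqr (f : G -> 'Z_4) v :
  {morph f : x y / x + y} -> f v *+ 2 != 0 -> 2 * \sum_u chiZ4 (f u) ^+ 2 = #|G|%:Z.
Proof.
move=> fD fv2; have f2D : {morph (fun u => f u + f u) : x y / x + y}.
  by move=> x y; rewrite fD addrACA.
under eq_bigr do rewrite expr2.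
rewrite sum_chiZ4_mul (@sum_chiZ4_additive _ v) -?mulr2n // add0r.
by under eq_bigr do rewrite subrr; rewrite sumr_const natz.
Qed.

Lemma sum_chiZ4_mul_additive (f1 f2 : G -> 'Z_4) v1 v2 :
  {morph f1 : x y / x + y} -> {morph f2 : x y / x + y} ->
  f1 v1 + f2 v1 != 0 -> f1 v2 - f2 v2 != 0 ->
  \sum_u chiZ4 (f1 u) * chiZ4 (f2 u) = 0.
Proof.
move=> f1D f2D sum0 diff0.
suff : 2 * \sum_u chiZ4 (f1 u) * chiZ4 (f2 u) = 0 by lia.
rewrite sum_chiZ4_mul (@sum_chiZ4_additive _ v1) ?(@sum_chiZ4_additive _ v2) ?addr0 //.
- by move=> x y; rewrite f1D f2D opprD addrACA.
- by move=> x y; rewrite f1D f2D addrACA.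
Qed.

End CharacterSums.

Section Rows.
Local Open Scope ring_scope.
Variable n : nat.
Implicit Types (x y z : 'rV['Z_4]_n) (a b : 'Z_4) (j l : 'I_n).

Lemma leeZ4_le2 a : (leeZ4 a <= 2)%N.
Proof. by case: a => -[|[|[|[|?]]]]. Qed.

Lemma leeW_le_double x : (leeW x <= n.*2)%N.
Proof.
rewrite -muln2 -[n in (n * 2)%N]card_ord -sum_nat_const.
by apply: leq_sum => i _; apply: leeZ4_le2.
Qed.

Lemma dotZ4D x y z : dotZ4 x (y + z) = dotZ4 x y + dotZ4 x z.
Proof. by rewrite /dotZ4 -big_split; apply: eq_bigr => i _; rewrite mxE mulrDr. Qed.

Lemma dotZ4_deltaZ x a j : dotZ4 x (a *: 'e_j) = x ord0 j * a.
Proof.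
rewrite /dotZ4 (bigD1 j) //= big1 => [|i ij]; rewrite !mxE eqxx ?(negbTE ij) /=.
  by rewrite mulr1 addr0.
by rewrite !mulr0.
Qed.

Lemma leeW_deltaZ a j : leeW (a *: 'e_j) = leeZ4 a.
Proof.
rewrite /leeW (bigD1 j) //= big1 => [|i ij]; rewrite !mxE eqxx ?(negbTE ij) /=.
  by rewrite mulr1 addn0.
by rewrite !mulr0.
Qed.

Lemma leeW_deltaZ2 a b j l :
  j != l -> leeW (a *: 'e_j + b *: 'e_l) = (leeZ4 a + leeZ4 b)%N.
Proof.
move=> jl; rewrite /leeW (bigD1 j) // (bigD1 l) 1?eq_sym //= big1 => [|i /andP[ij il]].
  by rewrite !mxE !eqxx (negbTE jl) eq_sym (negbTE jl) /= !mulr1 !mulr0 addr0 add0r addn0.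
by rewrite !mxE eqxx (negbTE ij) (negbTE il) !mulr0 addr0.
Qed.

Definition chiW (x : 'rV['Z_4]_n) : int := \sum_j chiZ4 (x ord0 j).

Lemma leeW_chiW (x : 'rV['Z_4]_n) : (leeW x)%:Z = n%:Z - chiW x.
Proof.
rewrite /leeW (big_morph _ PoszD (erefl 0%:Z)).
under eq_bigr do rewrite leeZ4_chiZ4.
by rewrite sumrB sumr_const card_ord natz.
Qed.

Lemma leeW0 : leeW (0 : 'rV['Z_4]_n) = 0%N.
Proof. by rewrite /leeW big1 // => i _; rewrite mxE. Qed.

Lemma chiW0 : chiW 0 = n%:Z.
Proof. by have := leeW_chiW 0; rewrite leeW0; lia. Qed.

Lemma leeW_neq0 x : leeW x != 0%N -> x != 0.
Proof. by apply: contraNneq => ->; rewrite leeW0. Qed.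

End Rows.

Lemma dL_le n (C : {set 'rV['Z_4]_n}) x : x \in C -> x != 0%R -> (dL C <= leeW x)%N.
Proof. by move=> xC x0; rewrite /dL -minEnat -leEnat; apply: bigmin_le_cond; rewrite xC. Qed.

Lemma dL_min_lee_weight n (C : {set 'rV['Z_4]_n}) w :
  w \in lee_weights C -> {in lee_weights C, forall w', w <= w'}%N -> dL C = w.
Proof.
rewrite mem_undup => /mapP[x]; rewrite mem_enum in_setD1 => /andP[x0 xC] -> wmin.
apply/anti_leq; rewrite dL_le //= /dL -minEnat -leEnat.
apply: le_bigmin => [|y /andP[yC y0]]; rewrite leEnat.
  by rewrite (leq_trans (leeW_le_double x)) // -addn3 leq_addr.
by rewrite wmin // mem_undup map_f // mem_enum in_setD1 y0.
Qed.

Lemma uniq_size2_lt (s : seq nat) :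
  uniq s -> size s = 2 -> exists p q, (p < q)%N /\ s =i [:: p; q].
Proof.
case: s => [|a [|b []]] //= /andP[]; rewrite inE => ab _ _.
case: (ltngtP a b) => [a_lt_b | b_lt_a | a_eq_b]; last by rewrite a_eq_b eqxx in ab.
  by exists a, b.
by exists b, a; split=> // w; rewrite !inE orbC.
Qed.

Lemma divn_mulSl_small m n : (n < m)%N -> (m.+1 * n %/ m)%N = n.
Proof. by move=> nm; rewrite mulSnr [(m * n)%N]mulnC divnMDl ?divn_small ?addn0 //; lia. Qed.

Lemma two_weight_arithmetic (K k1 n b A : nat) :
  (k1 <= K -> 0 < A -> A.+1 <= 2 ^ k1 -> b * A = n -> n.*2 + b.*2 = 2 ^ K ->
  exists2 t, 1 <= t <= k1 &
    [/\ A.+1 = 2 ^ t, n = 2 ^ (K - 1) - 2 ^ (K - t - 1) & n + b = 2 ^ (K - 1)])%N.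
Proof.
move=> k1K A_gt0 A_le bA nb.
have AbK : (A.+1 * b.*2 = 2 ^ K)%N by rewrite -nb -bA; nia.
have [t tK At] : exists2 t, (t <= K)%N & A.+1 = (2 ^ t)%N.
  by apply/dvdn_pfactor => //; rewrite -AbK dvdn_mulr.
have t_gt0 : (0 < t)%N by case: t At {tK} => // -[] A0; rewrite A0 in A_gt0.
have t_le : (t <= k1)%N by rewrite -(leq_exp2l _ _ (ltnSn 1)) -At (leq_trans A_le).
have b2 : (b.*2 = 2 ^ (K - t))%N.
  by apply/eqP; rewrite -(eqn_pmul2l (expn_gt0 2 t)) -{1}At AbK -expnD subnKC.
have [e KE] : exists e, K = (t + e).+1.
  exists (K - t).-1; case: (K - t) b2 (subnKC tK) => [|d] b2 <-; last by rewrite addnS.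
  by have := odd_double b; rewrite b2.
subst K; have {}b2 : b = (2 ^ e)%N.
  by apply: double_inj; rewrite b2 subSn ?leq_addr // addKn expnS mul2n.
exists t; first by rewrite t_gt0.
rewrite subn1 /= (_ : (t + e).+1 - t - 1 = e)%N; last by lia.
rewrite expnD -bA b2; split=> //; move: At; have := expn_gt0 2 t; nia.
Qed.

Section ProjectiveImage.
Local Open Scope ring_scope.
Variables (n : nat) (G : finZmodType) (F : G -> 'rV['Z_4]_n).
Hypothesis F_additive : {morph F : u v / u + v}.
Hypothesis coord_odd : forall j, exists u, F u ord0 j *+ 2 != 0.
Hypothesis coord_pm : forall j l, j != l ->
  (exists u, F u ord0 j + F u ord0 l != 0) /\ (exists u, F u ord0 j - F u ord0 l != 0).

Lemma coord_additive j : {morph (fun u => F u ord0 j) : u v / u + v}.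
Proof. by move=> u v; rewrite F_additive mxE. Qed.

Lemma sum_chiW : \sum_u chiW (F u) = 0.
Proof.
rewrite exchange_big big1 // => j _; have [v fv2] := coord_odd j.
apply: (sum_chiZ4_additive (v := v) (coord_additive j)).
by apply: contraNneq fv2 => ->; rewrite mul0rn.
Qed.

Lemma sum_chiW_sqr : 2 * \sum_u chiW (F u) ^+ 2 = (n * #|G|)%:Z.
Proof.
have -> : \sum_u chiW (F u) ^+ 2 =
    \sum_j \sum_l \sum_u chiZ4 (F u ord0 j) * chiZ4 (F u ord0 l).
  under eq_bigr do rewrite expr2 /chiW mulr_suml.
  under eq_bigr do under eq_bigr do rewrite mulr_sumr.
  by rewrite exchange_big; apply: eq_bigr => j _; rewrite exchange_big.
rewrite mulr_sumr (eq_bigr (fun _ => #|G|%:Z)) => [|j _].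
  by rewrite sumr_const card_ord -mulr_natl natz PoszM.
rewrite mulr_sumr (bigD1 j) //= [X in _ + X]big1 ?addr0 => [|l lj].
  have [v fv2] := coord_odd j.
  by under eq_bigr do rewrite -expr2; apply: sum_chiZ4_sqr fv2; apply: coord_additive.
rewrite eq_sym in lj; have [[v1 sum0] [v2 diff0]] := coord_pm lj.
by rewrite (sum_chiZ4_mul_additive (coord_additive j) (coord_additive l) sum0 diff0) mulr0.
Qed.

Lemma sum_chiW_2torsion (psi : G -> 'Z_4) :
  {morph psi : x y / x + y} -> (forall u, psi u *+ 2 = 0) ->
  \sum_u chiW (F u) * chiZ4 (psi u) = 0.
Proof.
move=> psiD psi2; under eq_bigr do rewrite mulr_suml.
rewrite exchange_big big1 // => j _; have [v fv2] := coord_odd j.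
have sum0 : F v ord0 j + psi v != 0.
  by apply: contraNneq fv2 => /eqP; rewrite addr_eq0 => /eqP ->; rewrite mulNrn psi2 oppr0.
have diff0 : F v ord0 j - psi v != 0.
  by apply: contraNneq fv2 => /eqP; rewrite subr_eq0 => /eqP ->; rewrite psi2.
exact: sum_chiZ4_mul_additive (coord_additive j) psiD sum0 diff0.
Qed.

Variables p q : nat.
Hypothesis p_lt_q : (p < q)%N.
Hypothesis two_weights : forall u, u != 0 -> leeW (F u) = p \/ leeW (F u) = q.
Hypothesis p_attained : exists2 u, u != 0 & leeW (F u) = p.
Hypothesis q_attained : exists2 u, u != 0 & leeW (F u) = q.
Hypothesis plotkin_bound : forall u, u != 0 -> (#|G| * n %/ (#|G| - 1) <= leeW (F u))%N.

Local Notation W u := (leeW (F u)).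

Lemma F0 : F 0 = 0. Proof. exact: morph_add0. Qed.

Lemma W0 : W 0 = 0%N. Proof. by rewrite F0 leeW0. Qed.

Lemma card_ge3 : (3 <= #|G|)%N.
Proof.
have [[up up0 Wup] [uq uq0 Wuq]] := (p_attained, q_attained).
suff : (1 < #|predC1 (0%R : G)|)%N by rewrite cardC1; case: #|G| => // -[].
apply/card_gt1P; exists up, uq; rewrite !inE up0 uq0; split=> //.
by apply: contraTneq p_lt_q => equ; rewrite -Wup -Wuq equ ltnn.
Qed.

Lemma double_length_le_card : (n.*2 <= #|G|)%N.
Proof.
have : (chiW (F 0)) ^+ 2 <= \sum_u chiW (F u) ^+ 2.
  by rewrite (bigD1 0) //= lerDl sumr_ge0 // => u _; apply: sqr_ge0.
have := sum_chiW_sqr.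
rewrite F0 chiW0 => sqr_sum sqr0_le; have : (n * n.*2 <= n * #|G|)%N by nia.
by case: (posnP n) => [-> | /leq_pmul2l ->].
Qed.

Lemma length_le_weight u : u != 0 -> (n <= W u)%N.
Proof.
have G_gt2 := card_ge3; have n_le := double_length_le_card.
have cardE : #|G| = (#|G| - 1).+1 by lia.
by move/plotkin_bound; rewrite {1}cardE divn_mulSl_small //; lia.
Qed.

Lemma p_eq_length : p = n.
Proof.
(* Otherwise every nonzero u has chiW (F u) <= -1, and the first moment
   would be at most n - (|G| - 1) < 0. *)
have [up up0 Wup] := p_attained; have := length_le_weight up0; rewrite Wup.
rewrite leq_eqVlt => /orP[/eqP // | n_lt_p].
have chiW_neg u : u != 0 -> chiW (F u) <= -1.
  by move=> u0; have := leeW_chiW (F u); case: (two_weights u0) => ->; lia.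
have : \sum_u chiW (F u) <= n%:Z - (#|G| - 1)%:Z.
  rewrite (bigD1 0) //= F0 chiW0 lerD2l.
  apply: le_trans (ler_sum _ (fun u u0 => chiW_neg u u0)) _.
  by rewrite sumr_const cardC1 mulNrn subn1 natz.
have := double_length_le_card; have := card_ge3; rewrite sum_chiW -muln2; lia.
Qed.

Definition heavy := [set u : G | leeW (F u) == q].

Lemma heavy0 : 0 \notin heavy.
Proof. by rewrite inE W0 eq_sym gtn_eqF // (leq_ltn_trans _ p_lt_q). Qed.

Lemma length_lt_q : (n < q)%N.
Proof. by rewrite -p_eq_length. Qed.

Lemma chiW_two_weight u :
  chiW (F u) = (if u == 0 then n%:Z else 0) - (if u \in heavy then (q - n)%:Z else 0).
Proof.
have n_lt_q := length_lt_q; have := leeW_chiW (F u); rewrite inE.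
have [->|u0] := eqVneq u 0; first by rewrite W0 eq_sym gtn_eqF //; lia.
case: (two_weights u0) => ->; rewrite ?p_eq_length ?eqxx ?ltn_eqF //; lia.
Qed.

Lemma heavy_gt0 : (0 < #|heavy|)%N.
Proof. by have [u _ Wu] := q_attained; apply/card_gt0P; exists u; rewrite inE Wu. Qed.

Lemma heavy_length : ((q - n) * #|heavy|)%N = n.
Proof.
have := sum_chiW; under eq_bigr do rewrite chiW_two_weight.
rewrite sumrB -!big_mkcond big_pred1_eq sumr_const -mulr_natr natz -PoszM.
by move/eqP; rewrite subr_eq0 => /eqP[].
Qed.

Lemma length_gt0 : (0 < n)%N.
Proof. by rewrite -heavy_length muln_gt0 subn_gt0 length_lt_q heavy_gt0. Qed.

Lemma card_two_weight : (n.*2 + (q - n).*2)%N = #|G|.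
Proof.
have sqrE u : chiW (F u) ^+ 2 =
    (if u == 0 then (n * n)%:Z else 0) + (if u \in heavy then ((q - n) * (q - n))%:Z else 0).
  rewrite chiW_two_weight; have [->|_] := eqVneq u 0.
    by rewrite (negbTE heavy0) subr0 addr0 expr2.
  by rewrite !add0r; case: ifP; rewrite ?oppr0 ?expr0n // sqrrN expr2.
have := sum_chiW_sqr; under eq_bigr do rewrite sqrE.
rewrite big_split -!big_mkcond /= big_pred1_eq sumr_const -mulr_natr natz.
have := heavy_length; have := heavy_gt0; have := length_lt_q.
nia.
Qed.

Lemma heavy_sub_kernel_2torsion (psi : G -> 'Z_4) :
  {morph psi : x y / x + y} -> (forall u, psi u *+ 2 = 0) ->
  {in 0 |: heavy, forall u, psi u = 0}.
Proof.
move=> psiD psi2; have := sum_chiW_2torsion psiD psi2.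
rewrite (eq_bigr (fun u => (if u == 0 then n%:Z * chiZ4 (psi u) else 0)
    - (if u \in heavy then (q - n)%:Z * chiZ4 (psi u) else 0))) => [|u _]; last first.
  by rewrite chiW_two_weight mulrBl; case: ifP; case: ifP; rewrite ?mul0r.
rewrite sumrB -!big_mkcond big_pred1_eq morph_add0 // mulr1 -mulr_sumr.
move=> sum_heavy; have qn0 : (q - n)%:Z != 0 by have := length_lt_q; lia.
have : \sum_(u in heavy) (1 - chiZ4 (psi u)) = 0.
  by apply: (mulfI qn0); rewrite mulr0 sumrB sumr_const mulrBr natz -PoszM heavy_length.
move=> /psumr_eq0P chi1 u; rewrite in_setU1 => /predU1P[-> | uH]; first exact: morph_add0.
by apply/eqP; rewrite -chiZ4_eq1 eq_sym -subr_eq0 chi1 // => v _; rewrite subr_ge0 chiZ4_le1.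
Qed.

Lemma card_light_heavy : (#|[set u : G | leeW (F u) == n]| + #|heavy|).+1 = #|G|.
Proof.
have -> : [set u : G | W u == n] = ~: (0 |: heavy).
  apply/setP => u; rewrite !inE negb_or; have n_lt_q := length_lt_q.
  have [->|u0] := eqVneq u 0; first by rewrite W0 /= eq_sym (negbTE (lt0n_neq0 length_gt0)).
  by case: (two_weights u0) => ->; rewrite ?p_eq_length eqxx ?(ltn_eqF n_lt_q) ?(gtn_eqF n_lt_q).
by rewrite -(cardsC (0 |: heavy)) cardsU1 heavy0 add1n addnC.
Qed.

Lemma two_weight_image_parameters K k1 :
  #|G| = (2 ^ K)%N -> (k1 <= K)%N ->
  (forall S : {set G},
     (forall psi : G -> 'Z_4, {morph psi : x y / x + y} -> (forall u, psi u *+ 2 = 0) ->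
        {in S, forall u, psi u = 0}) ->
     (#|S| <= 2 ^ k1)%N) ->
  exists2 t, (1 <= t <= k1)%N &
    [/\ p = n, q = (2 ^ (K - 1))%N, n = (2 ^ (K - 1) - 2 ^ (K - t - 1))%N,
        #|heavy| = (2 ^ t - 1)%N & #|[set u | leeW (F u) == n]| = (2 ^ K - 2 ^ t)%N].
Proof.
move=> cardG k1K kernel_bound.
have := kernel_bound _ heavy_sub_kernel_2torsion; rewrite cardsU1 heavy0 add1n => heavy_le.
have := card_two_weight; rewrite cardG => card_eq.
have [t t_range [heavyE n_eq nq_eq]] :=
  two_weight_arithmetic k1K heavy_gt0 heavy_le heavy_length card_eq.
exists t => //; split; [exact: p_eq_length | | exact: n_eq | |].
- by rewrite -nq_eq subnKC // ltnW // length_lt_q.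
- by rewrite -heavyE subn1.
- by rewrite -cardG -card_light_heavy -heavyE subSS addnK.
Qed.

End ProjectiveImage.

Section Z4Z2.
Local Open Scope ring_scope.
Variables k1 k2 : nat.
Local Notation G := ('rV['Z_4]_k1 * 'rV['Z_2]_k2)%type.

Lemma card_Z4Z2 : #|{: G}| = (2 ^ (2 * k1 + k2))%N.
Proof. by rewrite card_prod !card_mx !card_ord !mul1n expnD expnM. Qed.

Lemma card_kernel_2torsion (S : {set G}) :
  (forall psi : G -> 'Z_4, {morph psi : x y / x + y} -> (forall u, psi u *+ 2 = 0) ->
     {in S, forall u, psi u = 0}) ->
  (#|S| <= 2 ^ k1)%N.
Proof.
move=> kerS.
have dbl1 i : {in S, forall u : G, u.1 ord0 i *+ 2 = 0}.
  apply: kerS => [x y | u] /=; first by rewrite mxE mulrnDl.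
  by rewrite -mulrnA -mulr_natr pchar_Zp ?mulr0.
have dbl2 j : {in S, forall u : G, double_Z2 (u.2 ord0 j) = 0}.
  by apply: kerS => [x y | u] /=; rewrite ?mxE ?double_Z2D ?double_Z2_2torsion.
have : (#|S| <= #|{: {ffun 'I_k1 -> bool}}|)%N.
  apply: (@leq_card_in _ _ (fun u : G => [ffun i => u.1 ord0 i == 2])).
  move=> [a1 b1] [a2 b2] uS vS /ffunP eq12; congr pair; apply/rowP => i.
    rewrite (Z4_2torsion (dbl1 i _ uS)) (Z4_2torsion (dbl1 i _ vS)).
    by have := eq12 i; rewrite !ffunE /= => ->.
  have /eqP := dbl2 i _ uS; have /eqP := dbl2 i _ vS.
  by rewrite !double_Z2_eq0 /= => /eqP -> /eqP ->.
by rewrite card_ffun card_bool card_ord.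
Qed.

End Z4Z2.

Section CodeImage.
Local Open Scope ring_scope.
Variables (n : nat) (C : {set 'rV['Z_4]_n}) (G : finZmodType) (F : G -> 'rV['Z_4]_n).
Hypothesis F_additive : {morph F : u v / u + v}.
Hypothesis F_inj : injective F.
Hypothesis F_onto : forall x, x \in C <-> exists u, x = F u.

Lemma code_imageE : C = F @: [set: G].
Proof.
apply/setP => x; apply/idP/imsetP => [/F_onto[u ->] | [u _ ->]]; first by exists u.
by apply/F_onto; exists u.
Qed.

Lemma card_code_image : #|C| = #|G|.
Proof. by rewrite code_imageE card_imset // cardsT. Qed.

Lemma image_eq0 u : (F u == 0) = (u == 0).
Proof. by rewrite -(inj_eq F_inj) (morph_add0 F_additive). Qed.

Lemma lee_weights_imageP w :
  w \in lee_weights C <-> exists2 u, u != 0 & leeW (F u) = w.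
Proof.
rewrite mem_undup; split => [/mapP[x] | [u u0 <-]].
  rewrite mem_enum in_setD1 => /andP[x0 /F_onto[u xE]] ->.
  by exists u; rewrite -?image_eq0 -?xE.
apply/mapP; exists (F u) => //; rewrite mem_enum in_setD1 image_eq0 u0.
by apply/F_onto; exists u.
Qed.

Lemma weight_count_image w : weight_count C w = #|[set u | leeW (F u) == w]|.
Proof.
rewrite /weight_count -(card_imset _ F_inj); apply: eq_card => x.
rewrite inE code_imageE; apply/andP/imsetP => [[/imsetP[u _ ->] Wu] | [u Wu ->]].
  by exists u; rewrite ?inE.
by rewrite imset_f ?inE //; move: Wu; rewrite inE.
Qed.

Lemma dL_image_le u : u != 0 -> (dL C <= leeW (F u))%N.
Proof. by rewrite -image_eq0; apply: dL_le; apply/F_onto; exists u. Qed.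

Lemma projective_image_light y :
  projective C -> y != 0 -> (leeW y <= 2)%N -> exists u, dotZ4 (F u) y != 0.
Proof.
move=> C_proj y0 y_light; apply/existsP; apply: contraTT y_light => /existsPn y_dual.
rewrite -ltnNge; apply: leq_trans C_proj (dL_le _ y0); rewrite inE.
by apply/forall_inP => x /F_onto[u ->]; apply: negbNE (y_dual u).
Qed.

Lemma projective_coord_odd : projective C -> forall j, exists u, F u ord0 j *+ 2 != 0.
Proof.
move=> C_proj j; have y_light : leeW (2 *: 'e_j : 'rV['Z_4]_n) = 2%N by rewrite leeW_deltaZ.
have y0 : 2 *: 'e_j != 0 :> 'rV['Z_4]_n by apply: leeW_neq0; rewrite y_light.
have [u] := projective_image_light C_proj y0 (eq_leq y_light).
by rewrite dotZ4_deltaZ mulr_natr; exists u.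
Qed.

Lemma projective_coord_pm : projective C -> forall j l, j != l ->
  (exists u, F u ord0 j + F u ord0 l != 0) /\ (exists u, F u ord0 j - F u ord0 l != 0).
Proof.
move=> C_proj j l jl.
have dual_witness b : leeZ4 b = 1%N -> exists u, F u ord0 j + F u ord0 l * b != 0.
  move=> b1; have y_light : leeW (1 *: 'e_j + b *: 'e_l : 'rV['Z_4]_n) = 2%N.
    by rewrite leeW_deltaZ2 // b1.
  have y0 : 1 *: 'e_j + b *: 'e_l != 0 :> 'rV['Z_4]_n by apply: leeW_neq0; rewrite y_light.
  have [u] := projective_image_light C_proj y0 (eq_leq y_light).
  by rewrite dotZ4D !dotZ4_deltaZ mulr1; exists u.
have [[u Fu] [v Fv]] := (dual_witness 1 erefl, dual_witness (-1) erefl).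
by rewrite mulr1 in Fu; rewrite mulrN1 in Fv; split; [exists u | exists v].
Qed.

End CodeImage.

Theorem theorem4p6 (n k1 k2 : nat) (C : {set 'rV['Z_4]_n}) :
  linear_code C -> code_type k1 k2 C -> projective C -> plotkin_optimal C ->
  size (lee_weights C) = 2 ->
  exists t : nat,
    [/\ (1 <= t <= k1)%N,
        n = dL C /\ dL C = (2 ^ (2 * k1 + k2 - 1) - 2 ^ (2 * k1 + k2 - t - 1))%N,
        (forall w, w \in lee_weights C <->
           (w = 2 ^ (2 * k1 + k2 - 1) - 2 ^ (2 * k1 + k2 - t - 1) \/
            w = 2 ^ (2 * k1 + k2 - 1))%N),
        weight_count C (2 ^ (2 * k1 + k2 - 1) - 2 ^ (2 * k1 + k2 - t - 1))%N
          = (2 ^ (2 * k1 + k2) - 2 ^ t)%N &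
        weight_count C (2 ^ (2 * k1 + k2 - 1))%N = (2 ^ t - 1)%N].
Proof.
move=> _ [F [F_add F_inj F_onto]] C_proj C_plotkin C_two.
have [p [q [p_lt_q weightsE]]] := uniq_size2_lt (undup_uniq _) C_two.
have weightP w : (w = p \/ w = q) <-> exists2 u, u != 0%R & leeW (F u) = w.
  rewrite -(lee_weights_imageP F_add F_inj F_onto) weightsE !inE.
  by split=> [[] -> | /orP[] /eqP]; rewrite ?eqxx ?orbT; auto.
have two_weights u : u != 0%R -> leeW (F u) = p \/ leeW (F u) = q.
  by move=> u0; apply/weightP; exists u.
have plotkin_bound u : u != 0%R -> (#|{: 'rV['Z_4]_k1 * 'rV['Z_2]_k2}| * n
    %/ (#|{: 'rV['Z_4]_k1 * 'rV['Z_2]_k2}| - 1) <= leeW (F u))%N.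
  by rewrite -(card_code_image F_inj F_onto) -C_plotkin; apply: dL_image_le.
have k1_le : (k1 <= 2 * k1 + k2)%N by lia.
have [t t_range [p_n q_eq n_eq heavyE lightE]] := two_weight_image_parameters F_add
  (projective_coord_odd F_onto C_proj) (projective_coord_pm F_onto C_proj) p_lt_q
  two_weights ((weightP p).1 (or_introl erefl)) ((weightP q).1 (or_intror erefl))
  plotkin_bound (card_Z4Z2 k1 k2) k1_le (@card_kernel_2torsion k1 k2).
subst p; have dL_n : dL C = n.
  apply: dL_min_lee_weight => [|w]; rewrite weightsE !inE; first by rewrite eqxx.
  by case/orP=> /eqP ->; [apply: leqnn | apply: ltnW].
exists t; split=> //.
- by rewrite dL_n.
- move=> w; rewrite -n_eq -q_eq.
  exact: iff_trans (lee_weights_imageP F_add F_inj F_onto w) (iff_sym (weightP w)).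
- by rewrite -n_eq (weight_count_image F_inj F_onto).
- by rewrite -q_eq (weight_count_image F_inj F_onto).
Qed.
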